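(* Let $1\le d<n$, $r=d(n-d)$, $\mathfrak C$ a maximal chain in $I(d,n)$ and $1\le t\le r-1$. (i) If $F_t(\mathfrak C)\neq0$, then $\sigma_{F_t(\mathfrak C)}=\sigma_{\mathfrak C}s_t$ and $\ell(\sigma_{F_t(\mathfrak C)})=\ell(\sigma_{\mathfrak C})+1$; in particular $\sigma_{F_t(\mathfrak C)}>_R\sigma_{\mathfrak C}$. (ii) If $E_t(\mathfrak C)\neq0$, then $\sigma_{E_t(\mathfrak C)}=\sigma_{\mathfrak C}s_t$ and $\ell(\sigma_{E_t(\mathfrak C)})=\ell(\sigma_{\mathfrak C})-1$; in particular $\sigma_{E_t(\mathfrak C)}<_R\sigma_{\mathfrak C}$.
   Context: $I(d,n)$: $d$-subsets of $\{1,\dots,n\}$ as increasing sequences, ordered by $\underline i\le\underline j$ iff $i_k\le j_k$ for all $k$. Maximal chains $\mathfrak C:\underline i_r>\cdots>\underline i_0$ (from $(n-d+1)\cdots n$ to $12\cdots d$); chains compared lexicographically via concatenated strings $\underline i_r\cdots\underline i_0$; $\mathfrak C_{\mathrm{right}}$ the smallest. Root operators $f_{s,h}$ ($1\le h\le d$, $h\le s<n-d+h$): $f_{s,h}(i_1\cdots i_d)$ replaces $i_h=s$ by $s+1$ if $i_h=s$ and ($h=d$ or $i_{h+1}\ge s+2$), else $0$. Along a maximal chain $\underline i_t=f_{s_t,h_t}(\underline i_{t-1})$, each admissible pair occurring exactly once; $\tilde f_t:=f_{s_t,h_t}$ for $\mathfrak C_{\mathrm{right}}$; $\sigma_{\mathfrak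 C}\in\mathsf S_r$ is defined by: the operator from $\underline i_{t-1}$ to $\underline i_t$ in $\mathfrak C$ is $\tilde f_{\sigma_{\mathfrak C}(t)}$. For $1\le t\le r-1$, the Bruhat interval $[\underline i_{t-1},\underline i_{t+1}]$ has 3 or 4 elements; if 4, say $\{\underline i_{t-1},\underline i_t,\underline i'_t,\underline i_{t+1}\}$, then $\underline i_t$ is a right peak if $\underline i'_t>_{lex}\underline i_t$ and a left peak if $\underline i_t>_{lex}\underline i'_t$. $F_t(\mathfrak C)$ (resp. $E_t(\mathfrak C)$) is the chain obtained by replacing $\underline i_t$ by $\underline i'_t$ if $\underline i_t$ is a right (resp. left) peak, and $0$ otherwise. $s_t=(t,t+1)\in\mathsf S_r$, $\ell$ is Coxeter length on $\mathsf S_r$, and $\le_R$ is the right weak Bruhat order ($u\le_R v$ iff some reduced word of $v$ begins with a reduced word of $u$). *)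

From mathcomp Require Import all_boot all_fingroup.
From Stdlib Require Import ClassicalEpsilon.

Set Implicit Arguments.
Unset Strict Implicit.
Unset Printing Implicit Defensive.

(* I(d,n): d-subsets of {1..n} as increasing sequences (seq nat).      *)

Definition inI (d n : nat) (x : seq nat) : bool :=
  [&& size x == d, sorted ltn x & all (fun a => 0 < a <= n) x].

Definition enumI (d n : nat) : seq (seq nat) :=
  [seq [seq (val i).+1 | i <- enum (A : {set 'I_n})] | A : {set 'I_n} <- enum [set A : {set 'I_n} | #|A| == d]].

Definition leI (x y : seq nat) : bool := all2 leq x y.
Definition ltI (x y : seq nat) : bool := leI x y && (x != y).

Definition botI (d : nat) : seq nat := iota 1 d.
Definition topI (d n : nat) : seq nat := iota (n - d).+1 d.

Definition coversI (d n : nat) (x y : seq nat) : bool :=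
  [&& inI d n x, inI d n y, ltI x y &
      ~~ has (fun z => ltI x z && ltI z y) (enumI d n)].

(* A maximal chain i_r > ... > i_0 is stored as the list
   [:: i_0; i_1; ...; i_r] (i_0 = 12..d, i_r = (n-d+1)..n),
   each element covering the previous one. *)
Definition maxchain (d n : nat) (C : seq (seq nat)) : bool :=
  if C is x :: C' then
    [&& x == botI d, last x C' == topI d n & path (coversI d n) x C']
  else false.

Definition at_ (C : seq (seq nat)) (t : nat) : seq nat := nth [::] C t.

Fixpoint lexlt (s t : seq nat) : bool :=
  match s, t with
  | a :: s', b :: t' => (a < b) || ((a == b) && lexlt s' t')
  | _, _ => false
  end.
Definition lexle (s t : seq nat) : bool := lexlt s t || (s == t).

(* chains compared lexicographically via the concatenated strings i_r ... i_0 *)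
Definition chainstr (C : seq (seq nat)) : seq nat := flatten (rev C).

Definition is_Cright (d n : nat) (C : seq (seq nat)) : Prop :=
  maxchain d n C /\
  forall C', maxchain d n C' -> lexle (chainstr C) (chainstr C').

Definition Cright (d n : nat) : seq (seq nat) :=
  epsilon (inhabits [::]) (is_Cright d n).

(* Root operators f_{s,h}; None plays the role of 0.                   *)
(* x = i_1 ... i_d is stored 0-based: i_h = nth 0 x h.-1.              *)

Definition rootop (d : nat) (p : nat * nat) (x : seq nat) : option (seq nat) :=
  let: (s, h) := p in
  if (nth 0 x h.-1 == s) && ((h == d) || (s.+2 <= nth 0 x h))
  then Some (set_nth 0 x h.-1 s.+1) else None.

Definition admissible (d n : nat) : seq (nat * nat) :=
  [seq (s, h) | h <- iota 1 d, s <- iota h (n - d)].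

Definition steppair (d n : nat) (x y : seq nat) : nat * nat :=
  nth (0, 0) [seq p <- admissible d n | rootop d p x == Some y] 0.

(* \tilde f_{j+1} (0-based index j): the operator from i_j to i_{j+1}
   along C_right *)
Definition tildef (d n j : nat) : nat * nat :=
  steppair d n (at_ (Cright d n) j) (at_ (Cright d n) j.+1).

(* Permutations.  'S_r acts on 'I_r = {0..r-1}; the paper's index t in *)
(* {1..r} corresponds to t-1.  permcomp u v is the composite u o v.       *)

Definition permcomp (r : nat) (u v : 'S_r) : 'S_r := (v * u)%g.

(* sadj r i = the simple transposition (i, i+1) in 0-based indexing,
   i.e. the paper's s_{i+1} = (i+1, i+2) *)
Definition sadj (r i : nat) : 'S_r :=
  match @insub nat (fun k => k < r) 'I_r i, @insub nat (fun k => k < r) 'I_r i.+1 with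
  | Some a, Some b => tperm a b
  | _, _ => 1%g
  end.

Definition sigma_spec (d n : nat) (C : seq (seq nat)) (s : 'S_(d * (n - d))) : bool :=
  [forall k : 'I_(d * (n - d)),
     rootop d (tildef d n (s k)) (at_ C k) == Some (at_ C k.+1)].
Arguments sigma_spec : clear implicits.

Definition sigmaC (d n : nat) (C : seq (seq nat)) : 'S_(d * (n - d)) :=
  odflt 1%g [pick s | sigma_spec d n C s].
Arguments sigmaC : clear implicits.

Definition validword (r : nat) (w : seq nat) : bool := all (fun i => i.+1 < r) w.
Definition wordprod (r : nat) (w : seq nat) : 'S_r :=
  foldr (fun i acc => permcomp (sadj r i) acc) 1%g w.

Definition is_coxlen (r : nat) (s : 'S_r) (k : nat) : Prop :=
  (exists w, [/\ validword r w, size w = k & wordprod r w = s]) /\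
  (forall w, validword r w -> wordprod r w = s -> k <= size w).

Definition coxlen (r : nat) (s : 'S_r) : nat := epsilon (inhabits 0) (is_coxlen s).

Definition reduced_word (r : nat) (w : seq nat) (s : 'S_r) : Prop :=
  [/\ validword r w, wordprod r w = s & size w = coxlen s].

Definition leR (r : nat) (u v : 'S_r) : Prop :=
  exists w1 w2, reduced_word w1 u /\ reduced_word (w1 ++ w2) v.
Definition ltR (r : nat) (u v : 'S_r) : Prop := leR u v /\ u <> v.

Definition intervalI (d n : nat) (x y : seq nat) : seq (seq nat) :=
  [seq z <- enumI d n | leI x z && leI z y].

Definition four (d n : nat) (C : seq (seq nat)) (t : nat) : bool :=
  size (intervalI d n (at_ C t.-1) (at_ C t.+1)) == 4.

Definition iprime (d n : nat) (C : seq (seq nat)) (t : nat) : seq nat :=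
  head [::] [seq z <- intervalI d n (at_ C t.-1) (at_ C t.+1)
             | z \notin [:: (at_ C t.-1); (at_ C t); (at_ C t.+1)]].

Definition rightpeak (d n : nat) (C : seq (seq nat)) (t : nat) : bool :=
  four d n C t && lexlt (at_ C t) (iprime d n C t).
Definition leftpeak (d n : nat) (C : seq (seq nat)) (t : nat) : bool :=
  four d n C t && lexlt (iprime d n C t) (at_ C t).

Definition Fop (d n : nat) (C : seq (seq nat)) (t : nat) : option (seq (seq nat)) :=
  if rightpeak d n C t then Some (set_nth [::] C t (iprime d n C t)) else None.
Definition Eop (d n : nat) (C : seq (seq nat)) (t : nat) : option (seq (seq nat)) :=
  if leftpeak d n C t then Some (set_nth [::] C t (iprime d n C t)) else None.

From mathcomp Require Import all_boot all_fingroup zify.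
From Stdlib Require Import ClassicalEpsilon.

Set Implicit Arguments.
Unset Strict Implicit.
Unset Printing Implicit Defensive.

(* A cover in I(d,n) increments a single coordinate, so a maximal chain is a
   sequence of r steps, and the root operator f_{s,h} of a step is read off from
   the incremented coordinate h and its old value s.  Coordinate values only grow,
   so every admissible pair occurs exactly once along a maximal chain and
   sigma_C is well defined.  A four-element interval [i_{t-1}, i_{t+1}] means
   that steps t and t+1 increment different coordinates a and b, and i'_t
   increments b first: replacing i_t by i'_t swaps the two steps, which composes
   sigma_C with s_t on the right.  C_right increments its coordinates in weakly
   decreasing order, since otherwise such a swap would make it lexicographically
   smaller.  At a right peak b < a, so the operators of steps t and t+1 appear in
   this order along C_right, i.e. sigma_C(t) < sigma_C(t+1), and the swap creates
   one inversion; at a left peak it removes one.  The Coxeter length is the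
   number of inversions, which yields the lengths and the weak-order comparisons. *)

Ltac nat_cases :=
  repeat match goal with
  | H : context [?a == ?b] |- _ => revert H
  end;
  repeat match goal with
  | |- context [?a == ?b] => case: (a =P b) => [?|?]; try subst
  end; intros; lia.

Lemma set_nth_incr_nth x i :
  i < size x -> set_nth 0 x i (nth 0 x i).+1 = incr_nth x i.
Proof.
move=> hi; apply: (@eq_from_nth _ 0) => [|k _].
  by rewrite size_set_nth size_incr_nth hi; apply/maxn_idPr.
by rewrite nth_set_nth nth_incr_nth /= eq_sym; case: eqP => [->|].
Qed.

Lemma sumn_incr_nth x i : sumn (incr_nth x i) = (sumn x).+1.
Proof.
elim: x i => [|a x IH] [|i] //=; first by elim: i.
by rewrite IH addnS.
Qed.

(** * Lexicographic order *)

Lemma lexlt_irrefl s : lexlt s s = false.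
Proof. by elim: s => //= a s ->; rewrite ltnn eqxx. Qed.

Lemma lexlt_asym s t : lexlt s t -> ~~ lexlt t s.
Proof.
elim: s t => [|a s IH] [|b t] //= /orP[ab|/andP[/eqP-> H]].
  by rewrite ltnNge (ltnW ab) /= eq_sym (ltn_eqF ab).
by rewrite ltnn eqxx /= IH.
Qed.

Lemma lexlt_total s t : size s = size t -> [|| lexlt s t, s == t | lexlt t s].
Proof.
elim: s t => [|a s IH] [|b t] // [] /IH H.
case: (ltngtP a b) => [ab|ab|<-] /=; rewrite ?ab ?orbT //.
by rewrite eqseq_cons eqxx ltnn.
Qed.

Lemma lexlt_incr_nth x a b :
  a < b -> b < size x -> lexlt (incr_nth x b) (incr_nth x a).
Proof.
elim: x a b => [|c x IH] [|a] [|b] //= ab hb; first by rewrite ltnSn.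
by rewrite eqxx ltnn IH.
Qed.

Lemma lexlt_incr_nth2 x a b : a < size x -> b < size x ->
  lexlt (incr_nth x a) (incr_nth x b) = (b < a).
Proof.
move=> ha hb; case: (ltngtP a b) => [ab|ba|<-]; last by rewrite lexlt_irrefl.
  by apply/negbTE/lexlt_asym/lexlt_incr_nth.
exact: lexlt_incr_nth.
Qed.

Lemma lexlt_cat2l p s t : lexlt (p ++ s) (p ++ t) = lexlt s t.
Proof. by elim: p => //= a p ->; rewrite ltnn eqxx. Qed.

Lemma lexlt_catr u v s s' :
  size u = size v -> lexlt u v -> lexlt (u ++ s) (v ++ s').
Proof.
elim: u v => [|a u IH] [|b v] //= [] /IH H /orP[->//|/andP[-> /H ->]].
by rewrite orbT.
Qed.

Lemma lexlt_chainstr_set_nth C t z : t < size C -> size z = size (at_ C t) ->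
  lexlt z (at_ C t) -> lexlt (chainstr (set_nth [::] C t z)) (chainstr C).
Proof.
move=> ht sz lt.
rewrite /chainstr -{2}(cat_take_drop t C) (drop_nth [::] ht) set_nthE ht.
rewrite !rev_cat !flatten_cat !rev_cons !flatten_rcons.
by rewrite -!catA lexlt_cat2l; apply: lexlt_catr.
Qed.

(* Ranks words so that lexicographic minima can be found by well-founded
   induction on [nat]. *)
Fixpoint num_of_digits N (s : seq nat) : nat :=
  if s is a :: s' then a * N ^ size s' + num_of_digits N s' else 0.

Lemma num_of_digits_lt N s :
  all (fun a => a < N) s -> num_of_digits N s < N ^ size s.
Proof.
elim: s => [|a s IH] //= /andP[aN /IH h].
rewrite expnS; set P := N ^ size s in h *; nia.
Qed.

Lemma lexlt_num_of_digits N s t : size s = size t ->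
  all (fun a => a < N) s -> all (fun a => a < N) t ->
  lexlt s t -> num_of_digits N s < num_of_digits N t.
Proof.
elim: s t => [|a s IH] [|b t] //= [] sz /andP[aN aS] /andP[bN bT].
case/orP=> [ab|/andP[/eqP<- H]]; last by rewrite sz ltn_add2l IH.
have := num_of_digits_lt aS; rewrite sz => h.
set P := N ^ size t in h *; nia.
Qed.

Lemma ex_lexmin (P : seq nat -> Prop) N k :
  (forall s, P s -> size s = k /\ all (fun a => a < N) s) -> (exists s, P s) ->
  exists2 s, P s & forall s', P s' -> lexle s s'.
Proof.
move=> bdP [s0 Ps0].
suff : forall m s, num_of_digits N s = m -> P s ->
  exists2 s, P s & forall s', P s' -> lexle s s' by move=> /(_ _ s0 erefl Ps0).
elim/ltn_ind=> m IH s Es Ps; subst m.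
have [[s' [Ps' lt]]|nex] := classic (exists s', P s' /\ lexlt s' s).
  have [[sz' bd'] [sz bd]] := (bdP s' Ps', bdP s Ps).
  have lt_num := lexlt_num_of_digits (etrans sz' (esym sz)) bd' bd lt.
  exact: IH lt_num s' erefl Ps'.
exists s => // s' Ps'; rewrite /lexle.
have [[sz' _] [sz _]] := (bdP s' Ps', bdP s Ps).
have /or3P[->|->|lt] // := lexlt_total (etrans sz (esym sz')); first by rewrite orbT.
by case: nex; exists s'.
Qed.

(** * Coxeter length as number of inversions *)

Section Coxeter.
Variable r : nat.
Implicit Types (s t : 'S_r) (w : seq nat).
Local Open Scope group_scope.

Definition invset s : {set 'I_r * 'I_r} :=
  [set p : 'I_r * 'I_r | (p.1 < p.2) && (s p.2 < s p.1)].
Definition ninv s := #|invset s|.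

Lemma permcompE (u v : 'S_r) (x : 'I_r) : permcomp u v x = u (v x).
Proof. by rewrite /permcomp permM. Qed.

Lemma ninvV_le s : ninv s <= ninv s^-1.
Proof.
have inj : injective (fun p : 'I_r * 'I_r => (s p.2, s p.1)).
  by move=> [a b] [c e] /= [] /perm_inj -> /perm_inj ->.
rewrite /ninv -(card_imset _ inj); apply: subset_leq_card.
apply/subsetP => q /imsetP [[a b] Hp ->]; move: Hp; rewrite !inE /= !permK.
by case/andP => -> ->.
Qed.

Lemma ninvV s : ninv s^-1 = ninv s.
Proof. by apply/eqP; rewrite eqn_leq ninvV_le -{2}(invgK s) ninvV_le. Qed.

Lemma val_tperm (i j z : 'I_r) : val (tperm i j z) =
  if val z == val i then val j else if val z == val j then val i else val z.
Proof.
case: tpermP => [->|->|h1 h2]; rewrite ?eqxx //; first by case: eqP => // /val_inj ->.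
by do 2!case: eqP => [/val_inj //|_].
Qed.

Section AdjacentTransposition.
Variables i j : 'I_r.
Hypothesis hij : val j = i.+1.

Lemma ltn_tperm_adj (x y : 'I_r) :
  ~~ ((x == i) && (y == j)) -> ~~ ((x == j) && (y == i)) -> x != y ->
  (tperm i j x < tperm i j y) = (x < y).
Proof.
rewrite -!val_eqE !val_tperm /= hij.
case: (val x =P val i); case: (val y =P val i); case: (val x =P i.+1);
  case: (val y =P i.+1) => /= *; apply/idP/idP; lia.
Qed.

Lemma invset_mul_tperm t (a b : 'I_r) : a < b ->
  ~~ ((t a == i) && (t b == j)) -> ~~ ((t a == j) && (t b == i)) ->
  ((a, b) \in invset (permcomp (tperm i j) t)) = ((a, b) \in invset t).
Proof.
move=> ab h1 h2; rewrite !inE /= ab /= !permcompE ltn_tperm_adj 1?andbC //.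
by rewrite (inj_eq perm_inj); apply: contraTneq ab => ->; rewrite ltnn.
Qed.

(* Only the pair of positions of [i] and [j] can change its inversion status. *)
Lemma ninv_tperm_mul_le t : ninv (permcomp (tperm i j) t) <= (ninv t).+1.
Proof.
set P := if t^-1 i < t^-1 j then (t^-1 i, t^-1 j) else (t^-1 j, t^-1 i).
apply: (@leq_trans #|P |: invset t|); last by rewrite cardsU1; case: (_ \notin _).
apply: subset_leq_card; apply/subsetP => -[a b] H.
rewrite in_setU1; case: eqP => //= HP.
have ab : a < b by move: H; rewrite inE => /andP[].
rewrite -invset_mul_tperm //; apply/negP => /andP[/eqP ta /eqP tb]; apply: HP.
  by rewrite /P -ta -tb !permK ab.
by rewrite /P -ta -tb !permK ltnNge (ltnW ab).
Qed.

Lemma ninv_tperm_mul t : t^-1 i < t^-1 j ->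
  ninv (permcomp (tperm i j) t) = (ninv t).+1.
Proof.
move=> hlt; apply/eqP; rewrite eqn_leq ninv_tperm_mul_le /=.
set P := (t^-1 i, t^-1 j).
have PnI : P \notin invset t by rewrite inE /= !permKV hlt /= hij -leqNgt.
apply: (@leq_trans #|P |: invset t|); first by rewrite cardsU1 PnI.
apply: subset_leq_card; apply/subsetP => -[a b]; rewrite in_setU1.
case/orP=> [/eqP ->|H].
  by rewrite inE /= hlt /= !permcompE !permKV tpermL tpermR hij.
have ab : a < b by move: H; rewrite inE => /andP[].
rewrite invset_mul_tperm //; apply/negP => /andP[/eqP ta /eqP tb].
  by move: H; rewrite inE /= ta tb hij; lia.
by move: hlt; rewrite -ta -tb !permK ltnNge (ltnW ab).
Qed.

Lemma ninv_mul_tperm s : s i < s j -> ninv (permcomp s (tperm i j)) = (ninv s).+1.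
Proof.
move=> hlt; rewrite -ninvV.
have -> : (permcomp s (tperm i j))^-1 = permcomp (tperm i j) s^-1.
  by rewrite /permcomp invMg tpermV.
by rewrite ninv_tperm_mul ?invgK // ninvV.
Qed.

End AdjacentTransposition.

Lemma sadjE i (h : i.+1 < r) : sadj r i = tperm (Ordinal (ltnW h)) (Ordinal h).
Proof. by rewrite /sadj (insubT (fun k => k < r) (ltnW h)) (insubT (fun k => k < r) h). Qed.

Lemma ninv1 : ninv 1 = 0.
Proof.
apply/eqP; rewrite cards_eq0; apply/eqP/setP => -[a b]; rewrite !inE /= !perm1.
by case: ltngtP.
Qed.

Lemma wordprod_cat w1 w2 :
  wordprod r (w1 ++ w2) = permcomp (wordprod r w1) (wordprod r w2).
Proof.
elim: w1 => [|i w1 IH] /=; first by rewrite /permcomp mulg1.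
by rewrite IH /permcomp mulgA.
Qed.

Lemma ninv_wordprod_le w : validword r w -> ninv (wordprod r w) <= size w.
Proof.
elim: w => [|i w IH] /=; first by rewrite ninv1.
case/andP => hi hw; rewrite sadjE.
by apply: leq_trans (ninv_tperm_mul_le _ _) _ => //=; rewrite ltnS IH.
Qed.

Lemma homo_ltn_perm_ge s :
  {homo s : a b / (a < b)%N} -> forall a : 'I_r, a <= s a.
Proof.
move=> s_incr; suff : forall k (a : 'I_r), val a = k -> k <= s a by move=> H a; apply: H.
elim=> [//|k IH] a ha.
have hk : k < r by apply: ltn_trans (ltn_ord a); rewrite ha.
have := s_incr (Ordinal hk) a; rewrite ha ltnSn => /(_ isT).
by apply: leq_trans; rewrite ltnS IH.
Qed.

Lemma ninv_eq0_homo s : ninv s = 0 -> {homo s : a b / (a < b)%N}.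
Proof.
move=> /eqP; rewrite cards_eq0 => /eqP H a b ab.
have : (a, b) \notin invset s by rewrite H inE.
rewrite inE /= ab /= -leqNgt leq_eqVlt => /orP[/eqP/val_inj/perm_inj E|//].
by move: ab; rewrite E ltnn.
Qed.

Lemma ninv_eq0 s : ninv s = 0 -> s = 1.
Proof.
move=> H; have H' : ninv s^-1 = 0 by rewrite ninvV.
apply/permP => a; rewrite perm1; apply/val_inj/eqP; rewrite eqn_leq.
rewrite (homo_ltn_perm_ge (ninv_eq0_homo H)) andbT.
by have := homo_ltn_perm_ge (ninv_eq0_homo H') (s a); rewrite permK.
Qed.

Lemma ninv_gt0_descent s : 0 < ninv s ->
  exists i (h : i.+1 < r), s (Ordinal h) < s (Ordinal (ltnW h)).
Proof.
rewrite card_gt0 => /set0Pn [[a b]]; rewrite inE /= => /andP[ab].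
suff : forall k (a b : 'I_r), (b : nat) = a + k.+1 -> s b < s a ->
    exists i (h : i.+1 < r), s (Ordinal h) < s (Ordinal (ltnW h)).
  by move=> H sba; apply: (H (b - a).-1 a b _ sba); lia.
elim=> [|k IH] {ab}a {}b hb sba.
  have h : a.+1 < r by have := ltn_ord b; lia.
  exists a, h; have -> : Ordinal h = b by apply/val_inj => /=; lia.
  by have -> : Ordinal (ltnW h) = a by apply/val_inj.
have hc : a + k.+1 < r by have := ltn_ord b; lia.
case: (ltngtP (s b) (s (Ordinal hc))) => H.
- have h : (a + k.+1).+1 < r by have := ltn_ord b; lia.
  exists (a + k.+1), h; have -> : Ordinal h = b by apply/val_inj => /=; lia.
  by have -> : Ordinal (ltnW h) = Ordinal hc by apply/val_inj.
- by apply: (IH a (Ordinal hc)) => //; apply: ltn_trans sba.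
- by move/val_inj/perm_inj: H => /(congr1 val) /=; rewrite hb; lia.
Qed.

Lemma ex_word_ninv s :
  exists w, [/\ validword r w, size w = ninv s & wordprod r w = s].
Proof.
move: s; suff : forall m s, ninv s = m ->
    exists w, [/\ validword r w, size w = ninv s & wordprod r w = s] by move=> H s; apply: H.
elim/ltn_ind=> m IH s Es.
have [Hs|Hp] := posnP (ninv s); first by exists [::]; rewrite Hs (ninv_eq0 Hs).
have [i [h hd]] := ninv_gt0_descent Hp.
set tau := tperm (Ordinal (ltnW h)) (Ordinal h).
set t := permcomp s tau.
have tt : permcomp t tau = s by rewrite /t /permcomp mulgA tperm2 mul1g.
have ht : ninv s = (ninv t).+1.
  by rewrite -{1}tt ninv_mul_tperm // /t !permcompE /tau tpermL tpermR.
have lt_t : ninv t < m by rewrite -Es ht.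
have [w [vw sw ww]] := IH _ lt_t t erefl.
exists (w ++ [:: i]); split.
- by move: vw; rewrite /validword all_cat => -> /=; rewrite h.
- by rewrite size_cat sw ht addn1.
- by rewrite wordprod_cat ww /= sadjE /permcomp mul1g -/tau -/(permcomp t tau) tt.
Qed.

Lemma coxlenE s : coxlen s = ninv s.
Proof.
have H : is_coxlen s (ninv s).
  by split; [exact: ex_word_ninv | move=> w vw <-; apply: ninv_wordprod_le].
have := epsilon_spec (inhabits 0) (is_coxlen s) (ex_intro _ _ H).
rewrite -/(coxlen s) => -[[w [vw <- ws]] lb].
have [w' [v' s' e']] := ex_word_ninv s.
apply/anti_leq/andP; split; first by rewrite -s'; apply: lb.
by rewrite -{1}ws ninv_wordprod_le.
Qed.

Lemma ltR_mul_sadj s i : i.+1 < r ->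
  coxlen (permcomp s (sadj r i)) = (coxlen s).+1 -> ltR s (permcomp s (sadj r i)).
Proof.
move=> h E; have [w [vw sw ws]] := ex_word_ninv s.
split; last by move=> e; move: E; rewrite -e => /n_Sn.
exists w, [:: i]; split; first by split => //; rewrite coxlenE.
split.
- by move: vw; rewrite /validword all_cat => -> /=; rewrite h.
- by rewrite wordprod_cat ws /= /permcomp mul1g.
- by rewrite size_cat sw E coxlenE addn1.
Qed.

Lemma coxlen_mul_sadj_up s i (h : i.+1 < r) : s (Ordinal (ltnW h)) < s (Ordinal h) ->
  coxlen (permcomp s (sadj r i)) = (coxlen s).+1 /\ ltR s (permcomp s (sadj r i)).
Proof.
move=> hlt.
have E : coxlen (permcomp s (sadj r i)) = (coxlen s).+1.
  by rewrite (sadjE h) !coxlenE ninv_mul_tperm.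
by split; last exact: ltR_mul_sadj.
Qed.

Lemma coxlen_mul_sadj_down s i (h : i.+1 < r) : s (Ordinal h) < s (Ordinal (ltnW h)) ->
  coxlen (permcomp s (sadj r i)) = coxlen s - 1 /\ ltR (permcomp s (sadj r i)) s.
Proof.
move=> hlt; set s' := permcomp s (sadj r i).
have back : permcomp s' (sadj r i) = s.
  by rewrite /s' (sadjE h) /permcomp mulgA tperm2 mul1g.
have [E lt] : coxlen (permcomp s' (sadj r i)) = (coxlen s').+1 /\
    ltR s' (permcomp s' (sadj r i)).
  by apply: coxlen_mul_sadj_up; rewrite /s' (sadjE h) !permcompE tpermL tpermR.
by rewrite back in E lt; rewrite E subn1.
Qed.

End Coxeter.

(** * The poset I(d,n) *)

Definition increasing (x : seq nat) :=
  forall k, k.+1 < size x -> nth 0 x k < nth 0 x k.+1.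

Lemma increasing_gap x : increasing x ->
  forall i j, i <= j -> j < size x -> nth 0 x i + (j - i) <= nth 0 x j.
Proof.
move=> H i; elim=> [|j IH] ij hj; first by move: ij; rewrite leqn0 => /eqP ->; lia.
case: (eqVneq i j.+1) => [->|ne]; first by rewrite subnn addn0.
have := IH (ltac:(lia) : i <= j) (ltnW hj); have := H j hj; lia.
Qed.

Lemma leIP x y : leI x y <->
  size x = size y /\ forall k, k < size x -> nth 0 x k <= nth 0 y k.
Proof.
elim: x y => [|a x IH] [|b y] //=; [by split => // -[] .. |].
rewrite /leI /= -/(leI x y); split.
  move=> /andP[ab /IH [sz H]]; split; first by rewrite sz.
  by case=> [|k] hk //=; apply: H.
case=> [[sz] H]; apply/andP; split; first exact: (H 0 isT).
by apply/IH; split => // k hk; exact: (H k.+1 hk).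
Qed.

Lemma leI_sumn x y : leI x y -> sumn x <= sumn y.
Proof. by elim: x y => [|a x IH] [|b y] //= /andP[ab /IH]; lia. Qed.

Lemma leI_sumn_eq x y : leI x y -> sumn x = sumn y -> x = y.
Proof.
elim: x y => [|a x IH] [|b y] //= /andP[ab H] E.
have := leI_sumn H => h; have ab' : a = b by lia.
by rewrite ab' (IH y H) //; lia.
Qed.

Lemma sumn_iota_add m k c : sumn (iota (m + k) c) = sumn (iota m c) + c * k.
Proof. by elim: c m => [|c IH] m //=; rewrite -addSn IH; lia. Qed.

Section Subsets.
Variables d n : nat.

Definition dsubset (x : seq nat) :=
  [/\ size x = d, increasing x & forall k, k < d -> 0 < nth 0 x k <= n].

Lemma inIP x : inI d n x <-> dsubset x.
Proof.
rewrite /inI; split.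
  move=> /and3P[/eqP sx so /(all_nthP 0) al]; split => //.
    case: x so {sx al} => [|a s] //= so k hk.
    by move/(pathP 0): so => /(_ k hk).
  by move=> k hk; apply: al; rewrite sx.
case=> sx hi bd; apply/and3P; split; first by rewrite sx.
  case: x {sx bd} hi => [|a s] //= hi.
  by apply/(pathP 0) => k hk; exact: hi.
by apply/(all_nthP 0) => k hk; apply: bd; rewrite -sx.
Qed.

Lemma dsubset_bounds x i : dsubset x -> i < d ->
  i < nth 0 x i /\ nth 0 x i + (d.-1 - i) <= n.
Proof.
case=> sx hi bd hid; split.
  have := increasing_gap hi (leq0n i) (ltac:(lia) : i < size x).
  have := bd 0 (leq_ltn_trans (leq0n _) hid); lia.
have := increasing_gap hi (ltac:(lia) : i <= d.-1) (ltac:(lia) : d.-1 < size x).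
have := bd d.-1 (ltac:(lia) : d.-1 < d); lia.
Qed.

Lemma dsubset_incr_nth x i : dsubset x -> i < d ->
  (i.+1 < d -> (nth 0 x i).+1 < nth 0 x i.+1) -> (nth 0 x i).+1 <= n ->
  dsubset (incr_nth x i).
Proof.
case=> sx hi bd hid h1 h2; split.
- by rewrite size_incr_nth sx hid.
- move=> k; rewrite size_incr_nth sx hid => hk; rewrite !nth_incr_nth.
  have := hi k (ltac:(lia)); have := bd k (ltnW hk); have := bd i hid.
  have : k = i -> (nth 0 x i).+1 < nth 0 x i.+1 by move=> e; apply: h1; rewrite -e.
  nat_cases.
- move=> k hk; rewrite nth_incr_nth; have := bd k hk; have := bd i hid; nat_cases.
Qed.

Lemma mem_enumI z : (z \in enumI d n) = inI d n z.
Proof.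
have sorted_enum (A : {set 'I_n}) : sorted ltn [seq (val i).+1 | i <- enum A].
  rewrite sorted_map /enum_mem -enumT /=.
  apply: sorted_filter; first by move=> a b c /= ab bc; apply: ltn_trans ab bc.
  have := iota_ltn_sorted 0 n; rewrite -val_enum_ord sorted_map.
  by apply: sub_sorted => a b /=; rewrite ltnS.
apply/idP/idP.
  case/mapP => A; rewrite mem_enum inE => /eqP cA ->; apply/and3P; split.
  - by rewrite size_map -cardE cA.
  - exact: sorted_enum.
  - by apply/allP => k /mapP [i _ ->]; rewrite /= ltn_ord.
move=> zI; have := zI; move/and3P: zI => [/eqP sz so /allP al] _.
set A := [set i : 'I_n | (val i).+1 \in z].
have E : [seq (val i).+1 | i <- enum A] = z.
  apply: (irr_sorted_eq ltn_trans ltnn (sorted_enum A) so) => k.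
  apply/mapP/idP => [[i]|kz]; first by rewrite mem_enum inE => H ->.
  have /andP[k0 kn] := al k kz; have hk : k.-1 < n by lia.
  by exists (Ordinal hk); rewrite ?mem_enum ?inE /= prednK.
apply/mapP; exists A => //.
by rewrite mem_enum inE cardE -(size_map (fun i : 'I_n => (val i).+1)) E sz.
Qed.

Lemma enumI_uniq : uniq (enumI d n).
Proof.
have succ_inj : injective (fun i : 'I_n => (val i).+1) by move=> i j [] /val_inj.
rewrite map_inj_in_uniq ?enum_uniq // => A B _ _ E.
apply/setP => i; rewrite -(mem_enum A) -(mem_enum B).
by rewrite -(mem_map succ_inj) E (mem_map succ_inj).
Qed.

Lemma coversP x y : coversI d n x y <->
  [/\ dsubset x, dsubset y & exists2 i, i < d & y = incr_nth x i].
Proof.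
split.
  move=> /and4P[/inIP gx /inIP gy /andP[le ne] nh]; split => //.
  have [sx _ _] := gx; have [sy _ _] := gy.
  have [_ le'] := (leIP x y).1 le; rewrite sx in le'.
  pose P k := (k < d) && (nth 0 x k < nth 0 y k).
  have ex : exists k, P k.
    case: (boolP (has P (iota 0 d))) => [/hasP[k _ Pk] | /hasPn H]; first by exists k.
    case/eqP: ne; apply: (@eq_from_nth _ 0); first by rewrite sx sy.
    move=> k; rewrite sx => hk; have := H k; rewrite mem_iota /= hk => /(_ isT).
    rewrite /P hk /= -leqNgt; have := le' k hk; lia.
  have P_le k : P k -> k <= d by case/andP => /ltnW.
  have [j /andP[jd xy] mx] := ex_maxnP ex P_le.
  have eqa : forall k, j < k < d -> nth 0 x k = nth 0 y k.
    move=> k /andP[jk kd]; have h1 := le' k kd; have h2 := mx k; rewrite /P kd /= in h2.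
    apply/eqP; rewrite eqn_leq h1 /= leqNgt; apply/negP => h3; have := h2 h3; lia.
  have gz : dsubset (incr_nth x j).
    apply: dsubset_incr_nth => //.
      move=> hj; have [_ iy _] := gy; have := iy j; rewrite sy => /(_ hj).
      have := eqa j.+1; rewrite ltnSn hj => /(_ isT); lia.
    by have [_ _ /(_ j jd)] := gy; lia.
  case: (eqVneq y (incr_nth x j)) => [E|NE]; first by exists j.
  case/negP: nh; apply/hasP; exists (incr_nth x j); first by rewrite mem_enumI; apply/inIP.
  apply/andP; split; apply/andP; split.
  - apply/leIP; rewrite size_incr_nth sx jd; split => // k hk; rewrite nth_incr_nth; lia.
  - apply/eqP => /(congr1 (fun s => nth 0 s j)); rewrite nth_incr_nth eqxx; lia.
  - apply/leIP; rewrite size_incr_nth sx sy jd; split => // k hk; rewrite nth_incr_nth.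
    by case: eqP => [<-|_]; [lia | apply: le'].
  - by rewrite eq_sym.
case=> gx gy [i hi Ey]; subst y; have [sx _ _] := gx.
apply/and4P; split; try by apply/inIP.
  apply/andP; split.
    apply/leIP; rewrite size_incr_nth sx hi; split => // k hk.
    by rewrite nth_incr_nth; lia.
  apply/eqP => /(congr1 (fun s => nth 0 s i)); rewrite nth_incr_nth eqxx; lia.
apply/hasPn => z zI; apply/negP => /andP[/andP[lxz nxz] /andP[lzy nzy]].
have [e1 le1] := (leIP x z).1 lxz; have [e2 le2] := (leIP z _).1 lzy.
rewrite size_incr_nth sx hi in e2.
case: (eqVneq (nth 0 z i) (nth 0 x i)) => [E|NE].
  case/eqP: nxz; apply: (@eq_from_nth _ 0) => // k hk.
  have := le1 k hk; have := le2 k; rewrite -e1 => /(_ hk); rewrite nth_incr_nth.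
  by case: eqP => [<-|_]; rewrite ?E; lia.
case/eqP: nzy; apply: (@eq_from_nth _ 0); first by rewrite size_incr_nth sx hi.
move=> k; rewrite -e1 => hk.
have := le1 k hk; have := le2 k; rewrite -e1 => /(_ hk); rewrite nth_incr_nth.
by move/eqP: NE; case: eqP => [<-|_]; lia.
Qed.

Lemma sumn_top : sumn (topI d n) = sumn (botI d) + d * (n - d).
Proof. by rewrite /topI /botI -sumn_iota_add add1n. Qed.

Hypothesis hdn : 0 < d < n.

Lemma dsubset_bot : dsubset (botI d).
Proof.
split; first by rewrite size_iota.
  by move=> k; rewrite size_iota => hk; rewrite !nth_iota; lia.
by move=> k hk; rewrite nth_iota //; lia.
Qed.

Lemma dsubset_leI_top x : dsubset x -> leI x (topI d n).
Proof.
move=> sx; apply/leIP; case: (sx) => size_x _ _; split; first by rewrite size_iota.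
move=> k; rewrite size_x => hk; rewrite nth_iota //.
have [_] := dsubset_bounds sx hk; lia.
Qed.

End Subsets.

(** * Maximal chains and their root operators *)

Lemma sumn_map_const (T : Type) (s : seq T) c : sumn [seq c | _ <- s] = size s * c.
Proof. by elim: s => //= _ s ->; rewrite mulSn. Qed.

Definition diffidx (x y : seq nat) := find (fun p : nat * nat => p.1 != p.2) (zip x y).

Lemma diffidx_incr_nth x i : i < size x -> diffidx x (incr_nth x i) = i.
Proof.
elim: x i => [|a x IH] [|i] //= h; first by rewrite /diffidx /= neq_ltn ltnSn.
by rewrite /diffidx /= eqxx /= -/(diffidx x (incr_nth x i)) IH.
Qed.

(* [step_root C k] is the pair [(s, h)] of the root operator [f_{s,h}] taking
   [i_k] to [i_{k+1}]; [h] is one more than the 0-based [step_coord C k]. *)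
Definition step_coord (C : seq (seq nat)) k := diffidx (at_ C k) (at_ C k.+1).
Definition step_root (C : seq (seq nat)) k :=
  (nth 0 (at_ C k) (step_coord C k), (step_coord C k).+1).

Lemma at_set_nth C t z k : at_ (set_nth [::] C t z) k = if k == t then z else at_ C k.
Proof. by rewrite /at_ nth_set_nth. Qed.

Section MaximalChains.
Variables d n : nat.
Hypothesis hdn : 0 < d < n.
Local Notation r := (d * (n - d)).
Implicit Types (C : seq (seq nat)) (x : seq nat).

Lemma maxchainP C : maxchain d n C <-> [/\ 0 < size C, at_ C 0 = botI d,
  at_ C (size C).-1 = topI d n &
  forall k, k.+1 < size C -> coversI d n (at_ C k) (at_ C k.+1)].
Proof.
case: C => [|x C] /=; first by split => // -[].
rewrite /at_ /= (set_nth_default x) //.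
rewrite -[nth x _ _]/(nth x (x :: C) (size (x :: C)).-1) nth_last /=.
split; first by case/and3P => /eqP h0 /eqP lt /(pathP [::]) pc.
case=> _ h0 hl hc; apply/and3P; split; [exact/eqP | exact/eqP |].
by apply/(pathP [::]) => k hk; exact: hc.
Qed.

Lemma maxchain_dsubset C k : maxchain d n C -> k < size C -> dsubset d n (at_ C k).
Proof.
case/maxchainP => _ h0 _ hc; case: k => [|k] hk; first by rewrite h0; apply: dsubset_bot.
by have /coversP [] := hc k hk.
Qed.

Lemma maxchain_cover C k : maxchain d n C -> k.+1 < size C ->
  exists2 i, i < d & at_ C k.+1 = incr_nth (at_ C k) i.
Proof. by case/maxchainP => _ _ _ hc hk; have /coversP [] := hc k hk. Qed.

Lemma maxchain_sumn C k : maxchain d n C -> k < size C ->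
  sumn (at_ C k) = sumn (botI d) + k.
Proof.
move=> mc; elim: k => [|k IH] hk; first by case/maxchainP: mc => _ -> _ _; rewrite addn0.
have [i hi ->] := maxchain_cover mc hk.
by rewrite sumn_incr_nth IH ?(ltnW hk) // addnS.
Qed.

Lemma size_maxchain C : maxchain d n C -> size C = r.+1.
Proof.
move=> mc; case/maxchainP: (mc) => s0 _ hl _.
have := maxchain_sumn mc (ltac:(lia) : (size C).-1 < size C).
by rewrite hl sumn_top => /addnI ->; rewrite prednK.
Qed.

Lemma size_at_maxchain C k : maxchain d n C -> k <= r -> size (at_ C k) = d.
Proof.
move=> mc hk; have hkC : k < size C by rewrite (size_maxchain mc).
by have [] := maxchain_dsubset mc hkC.
Qed.

Lemma maxchain_step C k : maxchain d n C -> k < r ->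
  step_coord C k < d /\ at_ C k.+1 = incr_nth (at_ C k) (step_coord C k).
Proof.
move=> mc hk; have hk' : k.+1 < size C by rewrite (size_maxchain mc).
have [i hi E] := maxchain_cover mc hk'.
have [sx _ _] := maxchain_dsubset mc (ltnW hk').
by rewrite /step_coord E diffidx_incr_nth ?sx.
Qed.

Lemma maxchain_nth_mono C k k' i : maxchain d n C -> k <= k' -> k' < size C ->
  nth 0 (at_ C k) i <= nth 0 (at_ C k') i.
Proof.
move=> mc kk'; elim: k' kk' => [|k' IH] kk' hk'; first by move: kk'; rewrite leqn0 => /eqP ->.
case: (eqVneq k k'.+1) => [->//|ne].
have [j _ ->] := maxchain_cover mc hk'.
have := IH (ltac:(lia) : k <= k') (ltnW hk'); rewrite nth_incr_nth; lia.
Qed.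

Lemma mem_admissible s h :
  ((s, h) \in admissible d n) = (0 < h <= d) && (h <= s < n - d + h).
Proof.
apply/allpairsPdep/andP.
  by case=> h' [s' [hm sm [-> ->]]]; move: hm sm; rewrite !mem_iota; lia.
by case=> h1 h2; exists h, s; split => //; rewrite mem_iota; lia.
Qed.

Lemma size_admissible : size (admissible d n) = r.
Proof.
by rewrite size_allpairs_dep (eq_map (size_iota ^~ _)) sumn_map_const size_iota.
Qed.

Lemma rootop_incr_nth x i : dsubset d n x -> dsubset d n (incr_nth x i) -> i < d ->
  rootop d (nth 0 x i, i.+1) x = Some (incr_nth x i).
Proof.
move=> [sx _ _] [s2 h2 _] hi; rewrite /rootop eqxx /= set_nth_incr_nth ?sx //.
case: (eqVneq i.+1 d) => //= ne.
have := h2 i; rewrite s2 => /(_ (ltac:(lia))); rewrite !nth_incr_nth eqxx.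
by rewrite (ltn_eqF (ltnSn i)) => ->.
Qed.

Lemma rootop_incr_nth_uniq p x i : p \in admissible d n -> i < size x ->
  rootop d p x = Some (incr_nth x i) -> p = (nth 0 x i, i.+1).
Proof.
case: p => s h; rewrite mem_admissible => /andP[/andP[h0 hd] _] hi; rewrite /rootop.
case: ifP => // /andP[/eqP xs _] [E].
have := congr1 (fun z => nth 0 z i) E; rewrite nth_set_nth /= nth_incr_nth eqxx.
by case: eqP => [ih|nih]; [rewrite ih xs prednK | lia].
Qed.

Lemma admissible_incr_nth x i : dsubset d n x -> dsubset d n (incr_nth x i) -> i < d ->
  (nth 0 x i, i.+1) \in admissible d n.
Proof.
move=> gx gy hi; rewrite mem_admissible.
have [b1 _] := dsubset_bounds gx hi; have [_ b2] := dsubset_bounds gy hi.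
by move: b2; rewrite nth_incr_nth eqxx; lia.
Qed.

Lemma steppair_incr_nth x i : dsubset d n x -> dsubset d n (incr_nth x i) -> i < d ->
  steppair d n x (incr_nth x i) = (nth 0 x i, i.+1).
Proof.
move=> gx gy hi; rewrite /steppair; set F := filter _ _.
have inF : (nth 0 x i, i.+1) \in F.
  by rewrite mem_filter rootop_incr_nth // eqxx admissible_incr_nth.
have allF p : p \in F -> p = (nth 0 x i, i.+1).
  rewrite mem_filter => /andP[/eqP E pa]; apply: rootop_incr_nth_uniq pa _ E.
  by have [-> _ _] := gx.
by case: F inF allF => [|q F'] //= _ H; apply: H; rewrite mem_head.
Qed.

Section Step.
Variables (C : seq (seq nat)) (k : nat).
Hypotheses (mc : maxchain d n C) (hk : k < r).

Let step_dsubset : dsubset d n (at_ C k) /\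
  dsubset d n (incr_nth (at_ C k) (step_coord C k)).
Proof.
have hk' : k.+1 < size C by rewrite (size_maxchain mc).
have [_ <-] := maxchain_step mc hk.
by split; apply: maxchain_dsubset => //; apply: ltnW.
Qed.

Lemma step_root_admissible : step_root C k \in admissible d n.
Proof.
have [g1 g2] := step_dsubset; have [hi _] := maxchain_step mc hk.
exact: admissible_incr_nth.
Qed.

Lemma rootop_step_root : rootop d (step_root C k) (at_ C k) = Some (at_ C k.+1).
Proof.
have [g1 g2] := step_dsubset; have [hi ->] := maxchain_step mc hk.
exact: rootop_incr_nth.
Qed.

Lemma steppair_step_root : steppair d n (at_ C k) (at_ C k.+1) = step_root C k.
Proof.
have [g1 g2] := step_dsubset; have [hi ->] := maxchain_step mc hk.
exact: steppair_incr_nth.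
Qed.

Lemma rootop_step_root_uniq p : p \in admissible d n ->
  rootop d p (at_ C k) = Some (at_ C k.+1) -> p = step_root C k.
Proof.
have [[sx _ _] _] := step_dsubset; have [hi ->] := maxchain_step mc hk.
by move=> pa; apply: rootop_incr_nth_uniq pa _; rewrite sx.
Qed.

End Step.

(* Coordinate values only grow along a chain, so no coordinate is incremented
   twice from the same value. *)
Lemma step_root_inj C k k' : maxchain d n C -> k < r -> k' < r ->
  step_root C k = step_root C k' -> k = k'.
Proof.
move=> mc.
suff lt_neq a b : a < b -> b < r -> step_root C a <> step_root C b.
  move=> hk hk' E; case: (ltngtP k k') => // H; first by case: (lt_neq _ _ H hk').
  by case: (lt_neq _ _ H hk).
move=> ab hb [E1 E2]; have [_ Ea] := maxchain_step mc (ltn_trans ab hb).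
have := maxchain_nth_mono (step_coord C a) mc ab (_ : b < size C).
rewrite (size_maxchain mc) Ea nth_incr_nth eqxx E1 E2 => /(_ (ltnW hb)); lia.
Qed.

Lemma step_root_onto C p : maxchain d n C -> p \in admissible d n ->
  exists2 k, k < r & step_root C k = p.
Proof.
move=> mc pa; set L := [seq step_root C k | k <- iota 0 r].
have [/mapP[k]|pL] := boolP (p \in L); first by rewrite mem_iota => hk ->; exists k.
have uL : uniq (p :: L).
  rewrite /= pL map_inj_in_uniq ?iota_uniq // => a b; rewrite !mem_iota.
  exact: step_root_inj.
have sub : {subset p :: L <= admissible d n}.
  move=> q; rewrite inE => /orP[/eqP -> //|/mapP[k]].
  by rewrite mem_iota => hk ->; apply: step_root_admissible.
by have := uniq_leq_size uL sub; rewrite /= size_map size_iota size_admissible ltnn.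
Qed.

End MaximalChains.

Lemma mem_interval_incr_nth2 x z a b : size z = size x -> a < size x -> b < size x ->
  (forall k, k < size x -> nth 0 x k <= nth 0 z k <= nth 0 (incr_nth (incr_nth x a) b) k) ->
  z \in [:: x; incr_nth x a; incr_nth x b; incr_nth (incr_nth x a) b].
Proof.
move=> sz ha hb H.
have size_a : size (incr_nth x a) = size x by rewrite size_incr_nth ha.
have size_b : size (incr_nth x b) = size x by rewrite size_incr_nth hb.
have size_ab : size (incr_nth (incr_nth x a) b) = size x by rewrite size_incr_nth size_a hb.
have eq_z w : size w = size x -> (forall k, k < size x -> nth 0 z k = nth 0 w k) -> z = w.
  by move=> sw Hw; apply: (@eq_from_nth _ 0) => [|k]; [rewrite sz sw | rewrite sz; apply: Hw].
have Ha := H a ha; have Hb := H b hb; rewrite !nth_incr_nth in Ha Hb.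
case: (eqVneq (nth 0 z a) (nth 0 x a)) => za; case: (eqVneq (nth 0 z b) (nth 0 x b)) => zb;
  [rewrite (eq_z x) ?inE ?eqxx // | rewrite (eq_z (incr_nth x b)) ?inE ?eqxx ?orbT //
  | rewrite (eq_z (incr_nth x a)) ?inE ?eqxx ?orbT // | ];
  try by move=> k hk; move: (H k hk); rewrite !nth_incr_nth; move: za zb Ha Hb; nat_cases.
case: (eqVneq a b) => [ab|ab].
  subst b; case: (eqVneq (nth 0 z a) (nth 0 x a).+1) => za1;
    [rewrite (eq_z (incr_nth x a)) | rewrite (eq_z (incr_nth (incr_nth x a) a))];
    rewrite ?inE ?eqxx ?orbT // => k hk; move: (H k hk); rewrite !nth_incr_nth;
    move: za zb za1 Ha Hb; nat_cases.
rewrite (eq_z (incr_nth (incr_nth x a) b)) ?inE ?eqxx ?orbT // => k hk.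
by move: (H k hk); rewrite !nth_incr_nth; move: za zb ab Ha Hb; nat_cases.
Qed.

Definition swap_chain (C : seq (seq nat)) i :=
  set_nth [::] C i.+1 (incr_nth (at_ C i) (step_coord C i.+1)).

Section Swap.
Variables d n : nat.
Hypothesis hdn : 0 < d < n.
Local Notation r := (d * (n - d)).
Variables (C : seq (seq nat)) (i : nat).
Hypotheses (mc : maxchain d n C) (hi : i.+1 < r).
Local Notation x := (at_ C i).
Local Notation a := (step_coord C i).
Local Notation b := (step_coord C i.+1).

Let steps_ab : [/\ a < d, b < d, at_ C i.+1 = incr_nth x a &
  at_ C i.+2 = incr_nth (incr_nth x a) b].
Proof.
have [ha E1] := maxchain_step hdn mc (ltnW hi); have [hb E2] := maxchain_step hdn mc hi.
by split => //; rewrite E2 E1.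
Qed.

Let size_x : size x = d := size_at_maxchain hdn mc (ltnW (ltnW hi)).

Lemma maxchain_swap : a != b -> dsubset d n (incr_nth x b) -> maxchain d n (swap_chain C i).
Proof.
move=> ab gz; have [ha hb E1 E2] := steps_ab; have sC := size_maxchain hdn mc.
case/maxchainP: (mc) => s0 h0 hl hc.
have sz : size (swap_chain C i) = size C by rewrite size_set_nth; apply/maxn_idPr; lia.
apply/maxchainP; split; rewrite ?sz // /swap_chain.
- by rewrite at_set_nth.
- by rewrite at_set_nth sC /= gtn_eqF // -hl sC.
move=> k hk; rewrite !at_set_nth; case: (eqVneq k i.+1) => [->|ki1].
  rewrite (gtn_eqF (ltnSn _)); apply/coversP; split => //.
    by apply: maxchain_dsubset; lia.
  by exists a => //; rewrite E2 incr_nthC.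
case: (eqVneq k.+1 i.+1) => [[->]|ki]; last by apply: hc.
apply/coversP; split => //; first by apply: maxchain_dsubset; lia.
by exists b.
Qed.

Lemma four_iprime : four d n C i.+1 ->
  [/\ a != b, iprime d n C i.+1 = incr_nth x b & dsubset d n (incr_nth x b)].
Proof.
have [ha hb E1 E2] := steps_ab.
rewrite /four /iprime [i.+1.-1]/= E1 E2; set I := intervalI _ _ _ _ => f4.
have I_sub z : z \in I -> z \in [:: x; incr_nth x a; incr_nth x b; incr_nth (incr_nth x a) b].
  rewrite mem_filter => /andP[/andP[/leIP[e1 le1] /leIP[e2 le2]] _].
  apply: mem_interval_incr_nth2; rewrite -?e1 ?size_x // => k hk.
  have hkx : k < size x by rewrite size_x.
  by rewrite le1 //= le2 // -e1.
have uI : uniq I by apply/filter_uniq/enumI_uniq.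
case EF : [seq z <- I | _] => [|z0 F'].
  have sub : {subset I <= [:: x; incr_nth x a; incr_nth (incr_nth x a) b]}.
    move=> z zi; apply/negPn/negP => zn.
    by have : z \in [seq z <- I | z \notin [:: x; incr_nth x a; incr_nth (incr_nth x a) b]];
      [rewrite mem_filter zn zi | rewrite EF].
  by have := uniq_leq_size uI sub; rewrite (eqP f4).
have : z0 \in [seq z <- I | z \notin [:: x; incr_nth x a; incr_nth (incr_nth x a) b]].
  by rewrite EF mem_head.
rewrite mem_filter => /andP[zn zi]; move: (I_sub _ zi) (zn); rewrite /= !inE.
case/or4P=> [/eqP->|/eqP->|/eqP z0b|/eqP->]; rewrite ?eqxx ?orbT //= => _.
have gz : dsubset d n z0.
  by move: zi; rewrite mem_filter mem_enumI => /andP[_ /inIP].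
rewrite -z0b; split => //; apply: contra zn => /eqP eab.
by rewrite z0b -eab !inE eqxx orbT.
Qed.

End Swap.

(** * The chain C_right *)

Section RightmostChain.
Variables d n : nat.
Hypothesis hdn : 0 < d < n.
Local Notation r := (d * (n - d)).
Local Notation Cr := (Cright d n).

Lemma ex_path_to_top x : dsubset d n x ->
  exists C, path (coversI d n) x C /\ last x C = topI d n.
Proof.
move=> gx; move: {-1}(sumn (topI d n) - sumn x) (erefl (sumn (topI d n) - sumn x)) => m.
elim: m x gx => [|m IH] x gx hm; have le := dsubset_leI_top hdn gx.
  by exists [::]; split => //=; apply: leI_sumn_eq => //; have := leI_sumn le; lia.
have [sx _ _] := gx; have [_ le'] := (leIP x _).1 le; rewrite sx in le'.
pose P k := (k < d) && (nth 0 x k < nth 0 (topI d n) k).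
have ex : exists k, P k.
  case: (boolP (has P (iota 0 d))) => [/hasP[k _ Pk] | /hasPn H]; first by exists k.
  suff xt : x = topI d n by move: hm; rewrite xt subnn.
  apply: (@eq_from_nth _ 0); first by rewrite sx size_iota.
  move=> k; rewrite sx => hk; have := H k; rewrite mem_iota /= hk => /(_ isT).
  by rewrite /P hk /= -leqNgt; have := le' k hk; lia.
have P_le k : P k -> k <= d by case/andP => /ltnW.
have [j /andP[jd xy] mx] := ex_maxnP ex P_le.
have gy : dsubset d n (incr_nth x j).
  apply: dsubset_incr_nth => //; last by move: xy; rewrite nth_iota //; lia.
  move=> hj; have := le' j.+1 hj; have := mx j.+1; rewrite /P hj ltnn /=.
  by move: xy; rewrite !nth_iota //; lia.
have cv : coversI d n x (incr_nth x j) by apply/coversP; split => //; exists j.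
have [C [p l]] := IH (incr_nth x j) gy (ltac:(rewrite sumn_incr_nth; lia)).
by exists (incr_nth x j :: C); split => //=; rewrite cv.
Qed.

Lemma ex_maxchain : exists C, maxchain d n C.
Proof.
have [C [p l]] := ex_path_to_top (dsubset_bot hdn).
by exists (botI d :: C); rewrite /maxchain eqxx l eqxx p.
Qed.

Lemma size_chainstr C : maxchain d n C -> size (chainstr C) = r.+1 * d.
Proof.
move=> mc; rewrite -(size_maxchain hdn mc) size_flatten /shape map_rev sumn_rev.
suff -> : [seq size x | x <- C] = [seq d | _ <- C] by rewrite sumn_map_const.
apply/eq_in_map => x /(nthP [::]) [k hk <-].
by have [] := maxchain_dsubset hdn mc hk.
Qed.

Lemma chainstr_bounded C : maxchain d n C -> all (fun a => a < n.+1) (chainstr C).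
Proof.
move=> mc; apply/allP => a /flattenP [s]; rewrite mem_rev => /(nthP [::]) [k hk <-].
move=> /(nthP 0) [j hj <-]; have [ss _ bd] := maxchain_dsubset hdn mc hk.
have hjd : j < d by rewrite -ss.
by have /andP[] := bd j hjd.
Qed.

Lemma Cright_spec : is_Cright d n Cr.
Proof.
apply: (epsilon_spec (inhabits [::]) (is_Cright d n)).
pose P s := exists2 C, maxchain d n C & chainstr C = s.
have bdP s : P s -> size s = r.+1 * d /\ all (fun a => a < n.+1) s.
  by case=> C mc <-; split; [apply: size_chainstr | apply: chainstr_bounded].
have exP : exists s, P s by have [C0 mc0] := ex_maxchain; exists (chainstr C0), C0.
have [_ [C mc <-] minC] := ex_lexmin bdP exP.
by exists C; split => // C' mc'; apply: minC; exists C'.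
Qed.

Lemma maxchain_Cright : maxchain d n Cr.
Proof. by case: Cright_spec. Qed.

(* Otherwise swapping the two steps would give a lexicographically smaller chain. *)
Lemma Cright_step_coord_nonincr j : j.+1 < r -> step_coord Cr j.+1 <= step_coord Cr j.
Proof.
move=> hj; have [mc minC] := Cright_spec; rewrite leqNgt; apply/negP => ab.
have [ha E1] := maxchain_step hdn mc (ltnW hj); have [hb E2] := maxchain_step hdn mc hj.
rewrite E1 in E2; set x := at_ Cr j in E1 E2 *; set a := step_coord Cr j in ha ab E1 E2 *.
set b := step_coord Cr j.+1 in hb ab E2 *.
have sC := size_maxchain hdn mc.
have gx : dsubset d n x by apply: maxchain_dsubset; lia.
have [sx _ _] := gx.
have [sy iy bdy] : dsubset d n (incr_nth (incr_nth x a) b).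
  by rewrite -E2; apply: maxchain_dsubset; lia.
have gz : dsubset d n (incr_nth x b).
  apply: dsubset_incr_nth => // [hb1|].
    by have := iy b; rewrite sy => /(_ hb1); rewrite !nth_incr_nth; nat_cases.
  by have := bdy b hb; rewrite !nth_incr_nth; nat_cases.
have mc' := maxchain_swap hdn mc hj (negbT (ltn_eqF ab)) gz.
have lt : lexlt (chainstr (swap_chain Cr j)) (chainstr Cr).
  apply: lexlt_chainstr_set_nth; rewrite -/x -/b ?E1; first lia.
    by rewrite !size_incr_nth sx ha hb.
  by apply: lexlt_incr_nth; rewrite ?sx.
have /orP[gt|/eqP eq] := minC _ mc'; first by move: (lexlt_asym gt); rewrite lt.
by move: lt; rewrite eq lexlt_irrefl.
Qed.

Lemma Cright_step_coord_mono j j' : j <= j' -> j' < r -> step_coord Cr j' <= step_coord Cr j.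
Proof.
elim: j' => [|j' IH] jj hj; first by move: jj; rewrite leqn0 => /eqP ->.
case: (eqVneq j j'.+1) => [->//|ne].
exact: leq_trans (Cright_step_coord_nonincr hj) (IH (ltac:(lia)) (ltnW hj)).
Qed.

End RightmostChain.

(** * The permutation sigma_C *)

Section ChainPermutation.
Variables d n : nat.
Hypothesis hdn : 0 < d < n.
Local Notation r := (d * (n - d)).
Local Notation Cr := (Cright d n).
Variable C : seq (seq nat).
Hypothesis mc : maxchain d n C.

Lemma tildefE j : j < r -> tildef d n j = step_root Cr j.
Proof. by move=> hj; rewrite /tildef steppair_step_root // maxchain_Cright. Qed.

Lemma ex_sigma_spec : exists s : 'S_r, sigma_spec d n C s.
Proof.
have mcr := maxchain_Cright hdn.
set L := [seq step_root Cr j | j <- iota 0 r].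
have inL k : k < r -> step_root C k \in L.
  move=> hk; have [j hj <-] := step_root_onto hdn mcr (step_root_admissible hdn mc hk).
  by apply: map_f; rewrite mem_iota.
have index_lt (k : 'I_r) : index (step_root C k) L < r.
  by rewrite -{2}(size_iota 0 r) -(size_map (step_root Cr)) index_mem inL.
pose f (k : 'I_r) : 'I_r := Ordinal (index_lt k).
have nthL j : j < r -> nth (0, 0) L j = step_root Cr j.
  by move=> hj; rewrite (nth_map 0) ?size_iota // nth_iota.
have fE k : step_root Cr (f k) = step_root C k by rewrite -nthL //= nth_index // inL.
have f_inj : injective f.
  by move=> k k' E; apply/ord_inj/(step_root_inj hdn mc) => //; rewrite -!fE E.
exists (perm f_inj); apply/forallP => k.
by rewrite permE tildefE // fE (rootop_step_root hdn mc).
Qed.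

Lemma step_root_sigmaC (k : 'I_r) : step_root Cr (sigmaC d n C k) = step_root C k.
Proof.
rewrite /sigmaC; case: pickP => [s /forallP /(_ k) /eqP| none]; last first.
  by have [s spec] := ex_sigma_spec; move: (none s); rewrite spec.
rewrite tildefE // => /(rootop_step_root_uniq hdn mc (ltn_ord k)) <- //.
exact: step_root_admissible (maxchain_Cright hdn) _.
Qed.

Lemma step_coord_sigmaC (k : 'I_r) : step_coord Cr (sigmaC d n C k) = step_coord C k.
Proof. by have /(congr1 (fun p => p.2.-1)) := step_root_sigmaC k. Qed.

Lemma sigmaC_lt (k k' : 'I_r) : step_coord C k' < step_coord C k ->
  sigmaC d n C k < sigmaC d n C k'.
Proof.
rewrite ltnNge => lt; rewrite ltnNge; apply: contra lt => le.
by have := Cright_step_coord_mono hdn le (ltn_ord _); rewrite !step_coord_sigmaC.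
Qed.

End ChainPermutation.

Lemma step_rootE C k y c : at_ C k = y -> at_ C k.+1 = incr_nth y c -> c < size y ->
  step_root C k = (nth 0 y c, c.+1).
Proof. by move=> Ek Ek1 hc; rewrite /step_root /step_coord Ek Ek1 diffidx_incr_nth. Qed.

Section PeakSwap.
Variables d n : nat.
Hypothesis hdn : 0 < d < n.
Local Notation r := (d * (n - d)).
Variables (C : seq (seq nat)) (i : nat).
Hypotheses (mc : maxchain d n C) (hi : i.+1 < r).
Local Notation x := (at_ C i).
Local Notation a := (step_coord C i).
Local Notation b := (step_coord C i.+1).

Let size_x : size x = d := size_at_maxchain hdn mc (ltnW (ltnW hi)).

Lemma step_root_swap k : a != b -> step_root (swap_chain C i) k =
  if k == i then step_root C i.+1 else if k == i.+1 then step_root C i else step_root C k.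
Proof.
move=> ab; have [ha E1] := maxchain_step hdn mc (ltnW hi).
have [hb E2] := maxchain_step hdn mc hi; rewrite E1 in E2.
case: (eqVneq k i) => [->|ki].
  rewrite (@step_rootE _ i x b) ?at_set_nth ?(ltn_eqF (ltnSn i)) ?eqxx ?size_x //.
  rewrite (@step_rootE C i.+1 (incr_nth x a) b) ?size_incr_nth ?size_x ?ha //.
  by rewrite nth_incr_nth (negbTE ab).
case: (eqVneq k i.+1) => [->|ki1].
  have at_swap2 : at_ (swap_chain C i) i.+2 = incr_nth (incr_nth x b) a.
    by rewrite at_set_nth (gtn_eqF (ltnSn _)) E2 incr_nthC.
  rewrite (@step_rootE _ i.+1 (incr_nth x b) a) ?at_swap2 ?at_set_nth ?eqxx //;
    last by rewrite size_incr_nth size_x hb.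
  by rewrite nth_incr_nth eq_sym (negbTE ab).
by rewrite /step_root /step_coord /swap_chain !at_set_nth eqSS (negbTE ki) (negbTE ki1).
Qed.

Lemma sigmaC_swap : a != b -> dsubset d n (incr_nth x b) ->
  sigmaC d n (swap_chain C i) = permcomp (sigmaC d n C) (sadj r i).
Proof.
move=> ab gz; have mc' := maxchain_swap hdn mc hi ab gz.
rewrite (sadjE hi); apply/permP => k; rewrite permcompE.
apply/ord_inj/(step_root_inj hdn (maxchain_Cright hdn)) => //.
rewrite (step_root_sigmaC hdn mc') (step_root_sigmaC hdn mc) step_root_swap // val_tperm /=.
by case: ifP => // _; case: ifP.
Qed.

Lemma peak_swap : four d n C i.+1 -> [/\
  sigmaC d n (set_nth [::] C i.+1 (iprime d n C i.+1)) = permcomp (sigmaC d n C) (sadj r i),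
  lexlt (at_ C i.+1) (iprime d n C i.+1) = (b < a) &
  lexlt (iprime d n C i.+1) (at_ C i.+1) = (a < b)].
Proof.
move=> f4; have [ab -> gz] := four_iprime hdn mc hi f4.
have [ha E1] := maxchain_step hdn mc (ltnW hi); have [hb _] := maxchain_step hdn mc hi.
by rewrite E1 !lexlt_incr_nth2 ?size_x //; split => //; apply: sigmaC_swap.
Qed.

End PeakSwap.

Theorem proposition2p26 (d n : nat) (C : seq (seq nat)) (t : nat) :
  1 <= d < n ->
  maxchain d n C ->
  1 <= t <= d * (n - d) - 1 ->
  (forall C', Fop d n C t = Some C' ->
     [/\ sigmaC d n C' = permcomp (sigmaC d n C) (sadj (d * (n - d)) t.-1),
         coxlen (sigmaC d n C') = (coxlen (sigmaC d n C)).+1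
       & ltR (sigmaC d n C) (sigmaC d n C')]) /\
  (forall C', Eop d n C t = Some C' ->
     [/\ sigmaC d n C' = permcomp (sigmaC d n C) (sadj (d * (n - d)) t.-1),
         coxlen (sigmaC d n C') = (coxlen (sigmaC d n C)) - 1
       & ltR (sigmaC d n C') (sigmaC d n C)]).
Proof.
move=> hdn mc; case: t => [//|i]; rewrite succnK => ht.
have hi : i.+1 < d * (n - d) by lia.
have lt_sigma := sigmaC_lt hdn mc (k := Ordinal (ltnW hi)) (k' := Ordinal hi).
have gt_sigma := sigmaC_lt hdn mc (k := Ordinal hi) (k' := Ordinal (ltnW hi)).
split=> C'; [rewrite /Fop /rightpeak | rewrite /Eop /leftpeak];
  case: ifP => // /andP[f4 lex] [<-]; have [-> lexR lexL] := peak_swap hdn mc hi f4.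
- by rewrite lexR in lex; have [] := coxlen_mul_sadj_up (lt_sigma lex).
- by rewrite lexL in lex; have [] := coxlen_mul_sadj_down (gt_sigma lex).
Qed.
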